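(* Let $\mu_1,\mu_2$, $P_{n,m}$, the nearest neighbor recurrence coefficients $a_{n,m},b_{n,m},c_{n,m},d_{n,m}$, the shifted step-line recurrence coefficients and the numbers $c_n^{(j,0)}$, $c_n^{(0,k)}$ be as in the context. Then for $n\ge 0$ and $j\ge 1$: \begin{align*} c_{n+j,n} &= \beta_{2n+j}^{(j,0)}, & d_{n+j,n} &= c_{n+j,n}+c_n^{(j,0)},\\ a_{n+j,n} &= -\frac{\delta_{2n+j+1}^{(j-1,0)}}{c_n^{(j,0)}}, & b_{n+j,n} &= \gamma_{2n+j}^{(j,0)} - a_{n+j,n}, \end{align*} and for $n\ge 1$ and $k\ge 0$: \begin{align*} c_{n,n+k} &= \beta_{2n+k}^{(0,k)}, & d_{n,n+k} &= c_{n,n+k}+c_n^{(0,k)},\\ a_{n,n+k} &= -\frac{\delta_{2n+k}^{(0,k)}}{c_{n-1}^{(0,k)}}, & b_{n,n+k} &= \gamma_{2n+k}^{(0,k)} - a_{n,n+k}. \end{align*} The initial coefficients are $a_{0,0}=b_{0,0}=0$, $c_{0,0}=\beta_0$, and $d_{0,0}$ is a free parameter (not expressed through the step-line coefficients).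
   Context: Let $\mu_1,\mu_2$ be positive Borel measures on $\mathbb{R}$ with all moments finite, forming a normal system: for every $(n,m)\in\mathbb{N}^2$ there is a unique monic polynomial $P_{n,m}$ of degree $n+m$ with $\int x^k P_{n,m}\,d\mu_1=0$ for $0\le k\le n-1$ and $\int x^k P_{n,m}\,d\mu_2=0$ for $0\le k\le m-1$. Set $P_{n,m}=0$ if $n<0$ or $m<0$. Nearest neighbor recurrence relations: for $n,m\ge0$, \[ xP_{n,m}=P_{n+1,m}+c_{n,m}P_{n,m}+a_{n,m}P_{n-1,m}+b_{n,m}P_{n,m-1},\qquad xP_{n,m}=P_{n,m+1}+d_{n,m}P_{n,m}+a_{n,m}P_{n-1,m}+b_{n,m}P_{n,m-1}, \] defining the real numbers $a_{n,m},b_{n,m},c_{n,m},d_{n,m}$ (coefficients multiplying a zero polynomial, i.e. $a_{0,m}$ and $b_{n,0}$, are not determined by these relations). One has $P_{n+1,m}-P_{n,m+1}=(d_{n,m}-c_{n,m})P_{n,m}$. Step-line: $p_{2n}=P_{n,n}$, $p_{2n+1}=P_{n+1,n}$, with $xp_n=p_{n+1}+\beta_np_n+\gamma_np_{n-1}+\delta_np_{n-2}$, $p_{-1}=p_{-2}=0$. Shift $(j,0)$, $j\ge0$: $p_{2n+j}^{(j,0)}=P_{n+j,n}$, $p_{2n+j+1}^{(j,0)}=P_{n+j+1,n}$ ($n\ge0$), $p^{(j,0)}_{j-1}=p^{(j,0)}_{j-2}=0$, and for $n\ge j$: $xp_n^{(j,0)}=p_{n+1}^{(j,0)}+\beta_n^{(j,0)}p_n^{(j,0)}+\gamma_n^{(j,0)}p_{n-1}^{(j,0)}+\delta_n^{(j,0)}p_{n-2}^{(j,0)}$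 with $\gamma_j^{(j,0)}=\delta_j^{(j,0)}=\delta_{j+1}^{(j,0)}=0$. Shift $(0,k)$, $k\ge0$: $p_{2n+k}^{(0,k)}=P_{n,n+k}$, $p_{2n+k+1}^{(0,k)}=P_{n+1,n+k}$ ($n\ge-1$), and for $n\ge k$: $xp_n^{(0,k)}=p_{n+1}^{(0,k)}+\beta_n^{(0,k)}p_n^{(0,k)}+\gamma_n^{(0,k)}p_{n-1}^{(0,k)}+\delta_n^{(0,k)}p_{n-2}^{(0,k)}$ (coefficients of zero polynomials set to $0$). For $(j,0)=(0,k)=(0,0)$ these coincide with the step-line coefficients $\beta_n,\gamma_n,\delta_n$. The constants $c_n^{(j,0)}$ and $c_n^{(0,k)}$ ($n\ge0$) are defined by $P_{n+j+1,n}-P_{n+j,n+1}=c_n^{(j,0)}P_{n+j,n}$ and $P_{n+1,n+k}-P_{n,n+k+1}=c_n^{(0,k)}P_{n,n+k}$. *)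

From HB Require Import structures.
From mathcomp Require Import all_boot all_order all_algebra.
From mathcomp Require Import all_classical all_reals all_analysis.
Set Implicit Arguments. Unset Strict Implicit. Unset Printing Implicit Defensive.
Import Order.TTheory GRing.Theory Num.Theory.
Local Open Scope ring_scope.

Definition finite_moments (R : realType)
  (mu : {measure set (measurableTypeR R) -> \bar R}) : Prop :=
  forall k : nat, mu.-integrable setT (fun x : R => (x ^+ k)%:E).

Definition is_MOP (R : realType)
  (mu1 mu2 : {measure set (measurableTypeR R) -> \bar R})
  (n m : nat) (Q : {poly R}) : Prop :=
  [/\ Q \is monic, size Q = (n + m).+1,
      (forall k, (k < n)%N -> (\int[mu1]_x ((x ^+ k * Q.[x])%:E) = 0)%E) &
      (forall k, (k < m)%N -> (\int[mu2]_x ((x ^+ k * Q.[x])%:E) = 0)%E)].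

Definition normal_system (R : realType)
  (mu1 mu2 : {measure set (measurableTypeR R) -> \bar R}) : Prop :=
  forall n m : nat, exists! Q : {poly R}, is_MOP mu1 mu2 n m Q.

Definition Pdn (R : ringType) (P : nat -> nat -> {poly R}) (n m : nat) : {poly R} :=
  if (0 < n)%N then P n.-1 m else 0.
Definition Pdm (R : ringType) (P : nat -> nat -> {poly R}) (n m : nat) : {poly R} :=
  if (0 < m)%N then P n m.-1 else 0.

(* Shifted step-line (j,0): p_{2n+j} = P_{n+j,n}, p_{2n+j+1} = P_{n+j+1,n},
   and p_i = 0 for i < j. *)
Definition stepJ (R : ringType) (P : nat -> nat -> {poly R}) (j i : nat) : {poly R} :=
  if (i < j)%N then 0 else
  let t := (i - j)%N in
  if odd t then P (t./2 + j).+1 t./2 else P (t./2 + j)%N t./2.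

(* Shifted step-line (0,k): p_{2n+k} = P_{n,n+k}, p_{2n+k+1} = P_{n+1,n+k}
   (n >= -1, with P_{-1,.} = 0), and p_i = 0 below index k-2. *)
Definition stepK (R : ringType) (P : nat -> nat -> {poly R}) (k i : nat) : {poly R} :=
  if (i + 2 <= k)%N then 0 else
  let t := (i + 2 - k)%N in
  if odd t then P t./2 (t./2 + k).-1 else P t./2.-1 (t./2 + k).-1.

Definition back (R : ringType) (p : nat -> {poly R}) (i r : nat) : {poly R} :=
  if (r <= i)%N then p (i - r)%N else 0.

From HB Require Import structures.
From mathcomp Require Import all_boot all_order all_algebra.
From mathcomp Require Import all_classical all_reals all_analysis.
From mathcomp Require Import ring zify.
Import Order.TTheory GRing.Theory Num.Theory.
Set Implicit Arguments. Unset Strict Implicit. Unset Printing Implicit Defensive.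
Local Open Scope ring_scope.

(* Subtracting the two nearest neighbour relations gives
   P_{n+1,m} - P_{n,m+1} = (d_{n,m} - c_{n,m}) P_{n,m}, and normality forces
   d_{n,m} - c_{n,m} <> 0: otherwise P_{n+1,m+1} + P_{n+1,m} would be a second
   multiple orthogonal polynomial of index (n+1,m+1).
   A step-line recurrence read at an even index expresses x P_{n+1,m+1} in the
   four consecutive step-line polynomials P_{n+2,m+1}, P_{n+1,m+1}, P_{n+1,m},
   P_{n,m}.  Rewriting the nearest neighbour relation in the same basis (monic,
   of strictly decreasing degrees) and comparing coordinates identifies the
   step-line coefficients with c, a + b and -a (d - c).  The formula for
   a_{n+j,n} also needs the compatibility relation
   a_{n+1,m+1} (d - c)_{n,m} = (d - c)_{n+1,m} a_{n+1,m}. *)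

Section PolySize.
Variable R : nzRingType.
Implicit Types (p q r : {poly R}) (s : nat).

Lemma size_polyD_le p q s :
  (size p <= s)%N -> (size q <= s)%N -> (size (p + q)%R <= s)%N.
Proof. by move=> hp hq; apply: leq_trans (size_polyD p q) _; rewrite geq_max hp hq. Qed.

Lemma size_scale_le (x : R) p s : (size p <= s)%N -> (size (x *: p) <= s)%N.
Proof. exact: leq_trans (size_scale_leq _ _). Qed.

Lemma scale_add_coef_eq0 s (x : R) p r :
  p`_s = 1 -> (size r <= s)%N -> (size (x *: p + r)%R <= s)%N -> x = 0.
Proof.
move=> ps1 /leq_sizeP rs0 /leq_sizeP/(_ s (leqnn s)).
by rewrite coefD coefZ ps1 mulr1 rs0 // addr0.
Qed.

Lemma scale_add_eq0 s (x : R) p r :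
  p`_s = 1 -> (size r <= s)%N -> x *: p + r = 0 -> x = 0 /\ r = 0.
Proof.
move=> ps1 rs E; have x0 : x = 0 by apply: scale_add_coef_eq0 ps1 rs _; rewrite E size_poly0.
by split=> //; move: E; rewrite x0 scale0r add0r.
Qed.

End PolySize.

Lemma eq0_of_eq_sub (V : zmodType) (u v t : V) : u = v -> t = u - v -> t = 0.
Proof. by move=> -> ->; rewrite subrr. Qed.

Section Orthogonality.
Variables (R : realType) (mu1 mu2 : {measure set (measurableTypeR R) -> \bar R}).
Hypotheses (fm1 : finite_moments mu1) (fm2 : finite_moments mu2).

Lemma horner_integrable (mu : {measure set (measurableTypeR R) -> \bar R})
    (p : {poly R}) :
  finite_moments mu -> mu.-integrable setT (fun x : R => (p.[x])%:E).
Proof.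
move=> fm; apply: (@eq_integrable _ _ _ mu _ measurableT
  (fun x : R => (\sum_(i < size p) (p`_i)%:E * (x ^+ i)%:E)%E)).
  by move=> x _; rewrite horner_coef -sumEFin; apply: eq_bigr => i _; rewrite EFinM.
by apply: (integrable_sum measurableT) => i _; apply: (integrableZl measurableT).
Qed.

Lemma moment_integralD (mu : {measure set (measurableTypeR R) -> \bar R})
    (p q : {poly R}) k :
  finite_moments mu ->
  (\int[mu]_x ((x ^+ k * (p + q).[x])%:E) =
   \int[mu]_x ((x ^+ k * p.[x])%:E) + \int[mu]_x ((x ^+ k * q.[x])%:E))%E.
Proof.
move=> fm.
have int r : mu.-integrable setT (fun x : R => (x ^+ k * r.[x])%:E).
  apply: (@eq_integrable _ _ _ mu _ measurableT (fun x : R => (('X^k * r).[x])%:E)).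
    by move=> x _; rewrite hornerM hornerXn.
  exact: horner_integrable.
rewrite -(integralD measurableT (int p) (int q)); apply: eq_integral => x _.
by rewrite hornerD mulrDr EFinD.
Qed.

Lemma is_MOP_addr n m (Q S : {poly R}) :
  is_MOP mu1 mu2 n m Q -> (size S < size Q)%N ->
  (forall k, (k < n)%N -> (\int[mu1]_x ((x ^+ k * S.[x])%:E) = 0)%E) ->
  (forall k, (k < m)%N -> (\int[mu2]_x ((x ^+ k * S.[x])%:E) = 0)%E) ->
  is_MOP mu1 mu2 n m (Q + S).
Proof.
move=> [/monicP Q_monic Q_size Q_orth1 Q_orth2] SQ S_orth1 S_orth2; split.
- by apply/monicP; rewrite lead_coefDl.
- by rewrite size_polyDl.
- by move=> k kn; rewrite moment_integralD // Q_orth1 // S_orth1 // adde0.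
- by move=> k km; rewrite moment_integralD // Q_orth2 // S_orth2 // adde0.
Qed.

Lemma MOP_succ_neq (P : nat -> nat -> {poly R}) n m :
  normal_system mu1 mu2 -> (forall n m, is_MOP mu1 mu2 n m (P n m)) ->
  P n.+1 m != P n m.+1.
Proof.
move=> normal MOP; apply/eqP => Peq.
have size_P k l : size (P k l) = (k + l).+1 by case: (MOP k l).
have MOP' : is_MOP mu1 mu2 n.+1 m.+1 (P n.+1 m.+1 + P n.+1 m).
  apply: is_MOP_addr (MOP _ _) _ _ _; first by rewrite !size_P addnS.
    by case: (MOP n.+1 m).
  by rewrite Peq; case: (MOP n m.+1).
have [Q [_ Q_unique]] := normal n.+1 m.+1.
have P0 : P n.+1 m = 0.
  by apply: (@addrI _ (P n.+1 m.+1)); rewrite addr0 -(Q_unique _ MOP') (Q_unique _ (MOP _ _)).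
by have := size_P n.+1 m; rewrite P0 size_poly0.
Qed.

End Orthogonality.

Section StepLineIndex.
Variables (R : nzRingType) (P : nat -> nat -> {poly R}).

Lemma stepJ_even j n i : i = (2 * n + j)%N -> stepJ P j i = P (n + j)%N n.
Proof.
move=> ->; rewrite /stepJ ltnNge leq_addl /= addnK mul2n odd_double /=.
by rewrite doubleK.
Qed.

Lemma stepJ_odd j n i : i = (2 * n + j).+1%N -> stepJ P j i = P (n + j).+1 n.
Proof.
move=> ->; rewrite /stepJ ltnNge (leq_trans (leq_addl _ _) (leqnSn _)) /=.
by rewrite -addSn addnK mul2n /= odd_double /= uphalf_double.
Qed.

Lemma stepK_even k n i : i = (2 * n + k)%N -> stepK P k i = P n (n + k)%N.
Proof.
move=> ->; rewrite /stepK mul2n.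
have -> : (n.*2 + k + 2 <= k)%N = false by rewrite -addnn; lia.
have -> : (n.*2 + k + 2 - k)%N = (n.+1).*2 by rewrite -!addnn; lia.
by rewrite odd_double doubleK.
Qed.

Lemma stepK_odd k n i : i = (2 * n + k).+1%N -> stepK P k i = P n.+1 (n + k)%N.
Proof.
move=> ->; rewrite /stepK mul2n.
have -> : ((n.*2 + k).+1 + 2 <= k)%N = false by rewrite -addnn; lia.
have -> : ((n.*2 + k).+1 + 2 - k)%N = (n.+1).*2.+1 by rewrite -!addnn; lia.
by rewrite /= odd_double /= uphalf_double.
Qed.

Lemma backE (p : nat -> {poly R}) i r : (r <= i)%N -> back p i r = p (i - r)%N.
Proof. by rewrite /back => ->. Qed.

Lemma stepJ_rec_stair j n (x y z : R) (i := (2 * n.+1 + j)%N) :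
  'X * stepJ P j i = stepJ P j i.+1 + x *: stepJ P j i
    + y *: back (stepJ P j) i 1 + z *: back (stepJ P j) i 2 ->
  'X * P (n + j).+1 n.+1 =
    P (n + j).+2 n.+1 + x *: P (n + j).+1 n.+1 + y *: P (n + j).+1 n + z *: P (n + j)%N n.
Proof.
rewrite /i !backE; try lia.
rewrite (stepJ_odd (n := n) (i := (2 * n.+1 + j - 1)%N)); last lia.
rewrite (stepJ_even (n := n) (i := (2 * n.+1 + j - 2)%N)); last lia.
by rewrite (stepJ_even (n := n.+1)) // (stepJ_odd (n := n.+1)) // addSn.
Qed.

Lemma stepK_rec_stair k n (x y z : R) (i := (2 * n.+1 + k)%N) :
  'X * stepK P k i = stepK P k i.+1 + x *: stepK P k i
    + y *: back (stepK P k) i 1 + z *: back (stepK P k) i 2 ->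
  'X * P n.+1 (n + k).+1 =
    P n.+2 (n + k).+1 + x *: P n.+1 (n + k).+1 + y *: P n.+1 (n + k)%N + z *: P n (n + k)%N.
Proof.
rewrite /i !backE; try lia.
rewrite (stepK_odd (n := n) (i := (2 * n.+1 + k - 1)%N)); last lia.
rewrite (stepK_even (n := n) (i := (2 * n.+1 + k - 2)%N)); last lia.
by rewrite (stepK_even (n := n.+1)) // (stepK_odd (n := n.+1)) // addSn.
Qed.

End StepLineIndex.

Section NearestNeighbour.
Variables (R : fieldType) (P : nat -> nat -> {poly R}) (a b c d : nat -> nat -> R).
Hypothesis size_P : forall n m, size (P n m) = (n + m).+1.
Hypothesis P_monic : forall n m, P n m \is monic.
Hypothesis nn1 : forall n m, 'X * P n m =
  P n.+1 m + c n m *: P n m + a n m *: Pdn P n m + b n m *: Pdm P n m.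
Hypothesis nn2 : forall n m, 'X * P n m =
  P n m.+1 + d n m *: P n m + a n m *: Pdn P n m + b n m *: Pdm P n m.

Lemma coef_P_top n m : (P n m)`_(n + m) = 1.
Proof. by have /monicP := P_monic n m; rewrite lead_coefE size_P. Qed.

Lemma size_P_le n m s : (n + m < s)%N -> (size (P n m) <= s)%N.
Proof. by rewrite size_P. Qed.

Lemma size_Pdn n m : (size (Pdn P n m) <= n + m)%N.
Proof. by case: n => [|n]; rewrite /Pdn ?size_poly0 ?size_P_le. Qed.

Lemma size_Pdm n m : (size (Pdm P n m) <= n + m)%N.
Proof. by case: m => [|m]; rewrite /Pdm ?size_poly0 ?size_P_le ?addnS. Qed.

Lemma P_scale_add_eq0 n m (x : R) (r : {poly R}) :
  x *: P n m + r = 0 -> (size r <= n + m)%N -> x = 0 /\ r = 0.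
Proof. by move=> E rs; apply: scale_add_eq0 (coef_P_top n m) rs E. Qed.

Lemma P_scale_eq0 n m (x : R) : x *: P n m = 0 -> x = 0.
Proof.
by move=> E; have [] := P_scale_add_eq0 (etrans (addr0 _) E); rewrite ?size_poly0.
Qed.

Ltac size_combination :=
  repeat first [apply: size_polyD_le | apply: size_scale_le];
  apply: size_P_le; lia.

Lemma nn_shift n m : P n.+1 m = P n m.+1 + (d n m - c n m) *: P n m.
Proof.
have := nn1 n m; rewrite nn2 => e.
by apply/subr0_eq/(eq0_of_eq_sub (esym e)); rewrite -!mul_polyC; ring.
Qed.

Lemma nn_shift_down n m : P n m.+1 = P n.+1 m - (d n m - c n m) *: P n m.
Proof. by rewrite nn_shift addrK. Qed.

Lemma nn_shift_coef n m (k : R) :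
  P n.+1 m - P n m.+1 = k *: P n m -> k = d n m - c n m.
Proof.
move=> E; apply/subr0_eq/(@P_scale_eq0 n m).
by rewrite scalerBl -E nn_shift (addrC (P n m.+1)) addrK subrr.
Qed.

Lemma nn_coef_c n m (x : R) :
  (size ('X * P n m - P n.+1 m - x *: P n m)%R <= n + m)%N -> c n m = x.
Proof.
have -> : 'X * P n m - P n.+1 m - x *: P n m =
    (c n m - x) *: P n m + (a n m *: Pdn P n m + b n m *: Pdm P n m).
  by rewrite nn1 -!mul_polyC; ring.
move=> hs; apply/subr0_eq/(scale_add_coef_eq0 (coef_P_top n m) _ hs).
by apply: size_polyD_le; apply: size_scale_le; rewrite ?size_Pdn ?size_Pdm.
Qed.

Lemma nn_stair_coefs n m (x y z : R) :
  'X * P n.+1 m.+1 = P n.+2 m.+1 + x *: P n.+1 m.+1 + y *: P n.+1 m + z *: P n m ->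
  [/\ c n.+1 m.+1 = x, y = a n.+1 m.+1 + b n.+1 m.+1 &
      z = - a n.+1 m.+1 * (d n m - c n m)].
Proof.
rewrite nn1 /Pdn /Pdm /= (nn_shift_down n m) => e.
have E : (c n.+1 m.+1 - x) *: P n.+1 m.+1 + ((a n.+1 m.+1 + b n.+1 m.+1 - y) *: P n.+1 m
    + (- a n.+1 m.+1 * (d n m - c n m) - z) *: P n m) = 0.
  by apply: (eq0_of_eq_sub e); rewrite -!mul_polyC; ring.
have [cx {}E] := P_scale_add_eq0 E ltac:(size_combination).
have [yab /P_scale_eq0 zab] := P_scale_add_eq0 E ltac:(size_combination).
by split; [exact: subr0_eq | apply/esym/subr0_eq ..].
Qed.

Hypothesis nn_gap_neq0 : forall n m, d n m - c n m != 0.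

(* Multiply the shift identity for (n+1,m) by x and expand both sides in the
   basis P_{n+2,m}, P_{n+1,m}, P_{n,m}, P_{n,m-1}.  For m > 0 the last
   coordinate gives the analogous relation for b, which turns the coordinate of
   P_{n,m} into this one; for m = 0 that coordinate is already this one. *)
Lemma nn_compat n m :
  a n.+1 m.+1 * (d n m - c n m) = (d n.+1 m - c n.+1 m) * a n.+1 m.
Proof.
have e : 'X * P n.+2 m - 'X * P n.+1 m.+1 = (d n.+1 m - c n.+1 m) *: ('X * P n.+1 m).
  by rewrite -mulrBr (nn_shift n.+1 m) addrAC subrr add0r scalerAr.
rewrite (nn2 n.+2 m) (nn1 n.+1 m.+1) (nn1 n.+1 m) /Pdn /= in e.
rewrite (nn_shift_down n.+1 m) (nn_shift_down n m) in e.
set D := fun k l => d k l - c k l.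
case: m e => [|m] e.
  rewrite /Pdm /= !scaler0 !addr0 in e.
  have E : (d n.+2 0 - c n.+1 1 - D n.+1 0) *: P n.+2 0
      + ((a n.+2 0 + c n.+1 1 * D n.+1 0 - a n.+1 1 - b n.+1 1 - D n.+1 0 * c n.+1 0)
           *: P n.+1 0
      + (a n.+1 1 * D n 0 - D n.+1 0 * a n.+1 0) *: P n 0) = 0.
    by apply: (eq0_of_eq_sub e); rewrite /D -!mul_polyC; ring.
  have [_ {}E] := P_scale_add_eq0 E ltac:(size_combination).
  have [_ /P_scale_eq0] := P_scale_add_eq0 E ltac:(size_combination).
  exact: subr0_eq.
rewrite /Pdm /= (nn_shift n.+1 m) (nn_shift n m) in e.
have E : (d n.+2 m.+1 - c n.+1 m.+2 - D n.+1 m.+1) *: P n.+2 m.+1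
    + ((a n.+2 m.+1 + b n.+2 m.+1 + c n.+1 m.+2 * D n.+1 m.+1 - a n.+1 m.+2
          - b n.+1 m.+2 - D n.+1 m.+1 * c n.+1 m.+1) *: P n.+1 m.+1
    + ((b n.+2 m.+1 * D n.+1 m + a n.+1 m.+2 * D n m.+1
          - D n.+1 m.+1 * (a n.+1 m.+1 + b n.+1 m.+1)) *: P n m.+1
    + ((b n.+2 m.+1 * D n.+1 m - D n.+1 m.+1 * b n.+1 m.+1) * D n m) *: P n m)) = 0.
  by apply: (eq0_of_eq_sub e); rewrite /D -!mul_polyC; ring.
have [_ {}E] := P_scale_add_eq0 E ltac:(size_combination).
have [_ {}E] := P_scale_add_eq0 E ltac:(size_combination).
have [E1 /P_scale_eq0/eqP] := P_scale_add_eq0 E ltac:(size_combination).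
rewrite mulf_eq0 (negbTE (nn_gap_neq0 n m)) orbF => /eqP E2.
by apply/subr0_eq; rewrite -(subr0 0) -{1}E1 -E2 /D; ring.
Qed.

Lemma nn_gap_eq0 n m : (d n m - c n m == 0) = (P n.+1 m == P n m.+1).
Proof.
rewrite nn_shift -[RHS]subr_eq0 addrAC subrr add0r scaler_eq0.
by rewrite -size_poly_eq0 size_P orbF.
Qed.

Variables (betaJ gammaJ deltaJ betaK gammaK deltaK cJ cK : nat -> nat -> R).
Hypothesis stepJ_rec : forall j i, ((j < i) || (j == 0))%N -> 'X * stepJ P j i =
  stepJ P j i.+1 + betaJ j i *: stepJ P j i
  + gammaJ j i *: back (stepJ P j) i 1 + deltaJ j i *: back (stepJ P j) i 2.
Hypothesis stepJ_rec_start : forall j, (1 <= j)%N ->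
  (size ('X * stepJ P j j - stepJ P j j.+1 - betaJ j j *: stepJ P j j)%R <= j)%N.
Hypothesis stepK_rec : forall k i, (k <= i)%N -> 'X * stepK P k i =
  stepK P k i.+1 + betaK k i *: stepK P k i
  + gammaK k i *: back (stepK P k) i 1 + deltaK k i *: back (stepK P k) i 2.
Hypothesis cJ_def : forall j n,
  P (n + j).+1 n - P (n + j)%N n.+1 = cJ j n *: P (n + j)%N n.
Hypothesis cK_def : forall k n,
  P n.+1 (n + k)%N - P n (n + k).+1 = cK k n *: P n (n + k)%N.

Lemma stepJ_nn_coefs n j : (1 <= j)%N ->
  [/\ c (n + j)%N n = betaJ j (2 * n + j)%N,
      d (n + j)%N n = c (n + j)%N n + cJ j n,
      a (n + j)%N n = - deltaJ j.-1 (2 * n + j).+1 / cJ j n &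
      ((1 <= n)%N -> b (n + j)%N n = gammaJ j (2 * n + j)%N - a (n + j)%N n)].
Proof.
case: j => // j _ /=.
have cJ_gap : cJ j.+1 n = d (n + j.+1) n - c (n + j.+1) n := nn_shift_coef (cJ_def _ _).
have [c_eq b_eq] : c (n + j.+1) n = betaJ j.+1 (2 * n + j.+1) /\
    ((1 <= n)%N -> b (n + j.+1) n = gammaJ j.+1 (2 * n + j.+1) - a (n + j.+1) n).
  case: n {cJ_gap} => [|n].
    split=> //; rewrite muln0 !add0n; apply: nn_coef_c.
    have := stepJ_rec_start (erefl : (1 <= j.+1)%N).
    by rewrite (stepJ_even P (n := 0)) // (stepJ_odd P (n := 0)) // !add0n addn0.
  have := stepJ_rec (j := j.+1) (i := 2 * n.+1 + j.+1) ltac:(apply/orP; left; lia).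
  move=> /stepJ_rec_stair/nn_stair_coefs [cx yab _].
  by rewrite addSn cx; split=> // _; rewrite yab addrAC subrr add0r.
split=> //; first by rewrite cJ_gap addrC subrK.
rewrite (_ : (2 * n + j.+1).+1 = 2 * n.+1 + j)%N; last lia.
have := stepJ_rec (j := j) (i := 2 * n.+1 + j) ltac:(apply/orP; left; lia).
move=> /stepJ_rec_stair/nn_stair_coefs [_ _ ->].
by rewrite !mulNr opprK nn_compat cJ_gap !addnS mulrAC mulfV ?mul1r.
Qed.

Lemma stepK_nn_coefs n k : (1 <= n)%N ->
  [/\ c n (n + k)%N = betaK k (2 * n + k)%N,
      d n (n + k)%N = c n (n + k)%N + cK k n,
      a n (n + k)%N = - deltaK k (2 * n + k)%N / cK k n.-1 &
      b n (n + k)%N = gammaK k (2 * n + k)%N - a n (n + k)%N].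
Proof.
case: n => // n _ /=.
rewrite (nn_shift_coef (cK_def k n.+1)) (nn_shift_coef (cK_def k n)) !addSn.
have := stepK_rec (k := k) (i := 2 * n.+1 + k) ltac:(lia).
move=> /stepK_rec_stair/nn_stair_coefs [cx yab ->].
split=> //; first by rewrite addrC subrK.
  by rewrite !mulNr opprK mulfK.
by rewrite yab addrAC subrr add0r.
Qed.

Lemma stepJ_nn_coef0 : c 0 0 = betaJ 0 0.
Proof.
apply: nn_coef_c; have := stepJ_rec (j := 0) (i := 0) erefl.
rewrite /back /= !scaler0 !addr0 (stepJ_even P (n := 0)) // (stepJ_odd P (n := 0)) // => ->.
by rewrite addrAC addrK subrr size_poly0.
Qed.

End NearestNeighbour.

Theorem theorem2p3 (R : realType)
  (mu1 mu2 : {measure set (measurableTypeR R) -> \bar R})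
  (P : nat -> nat -> {poly R})
  (a b c d : nat -> nat -> R)
  (betaJ gammaJ deltaJ : nat -> nat -> R)
  (betaK gammaK deltaK : nat -> nat -> R)
  (cJ cK : nat -> nat -> R) :
  finite_moments mu1 -> finite_moments mu2 ->
  normal_system mu1 mu2 ->
  (forall n m, is_MOP mu1 mu2 n m (P n m)) ->
  (forall n m, 'X * P n m =
     P n.+1 m + c n m *: P n m + a n m *: Pdn P n m + b n m *: Pdm P n m) ->
  (forall n m, 'X * P n m =
     P n m.+1 + d n m *: P n m + a n m *: Pdn P n m + b n m *: Pdm P n m) ->
  (* exact for i > j, and for j = 0 *)
  (forall j i, ((j < i) || (j == 0))%N -> 'X * stepJ P j i =
     stepJ P j i.+1 + betaJ j i *: stepJ P j i
     + gammaJ j i *: back (stepJ P j) i 1 + deltaJ j i *: back (stepJ P j) i 2) ->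
  (* at i = j >= 1 the lower neighbours are the zero polynomial; beta_j^{(j,0)}
     is the coefficient of p_j, the relation holding up to degree < j *)
  (forall j, (1 <= j)%N ->
     (size ('X * stepJ P j j - stepJ P j j.+1 - betaJ j j *: stepJ P j j)%R <= j)%N) ->
  (forall j, gammaJ j j = 0 /\ deltaJ j j = 0 /\ deltaJ j j.+1 = 0) ->
  (forall k i, (k <= i)%N -> 'X * stepK P k i =
     stepK P k i.+1 + betaK k i *: stepK P k i
     + gammaK k i *: back (stepK P k) i 1 + deltaK k i *: back (stepK P k) i 2) ->
  (forall k, deltaK k k = 0) -> gammaK 0%N 0%N = 0 -> deltaK 0%N 1%N = 0 ->
  (* the step-line (0,0) coefficients: both shift families agree there *)
  (forall i, betaJ 0%N i = betaK 0%N i /\ gammaJ 0%N i = gammaK 0%N i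
             /\ deltaJ 0%N i = deltaK 0%N i) ->
  (forall j n, P (n + j).+1 n - P (n + j)%N n.+1 = cJ j n *: P (n + j)%N n) ->
  (forall k n, P n.+1 (n + k)%N - P n (n + k).+1 = cK k n *: P n (n + k)%N) ->
  (forall n j, (1 <= j)%N ->
     [/\ c (n + j)%N n = betaJ j (2 * n + j)%N,
         d (n + j)%N n = c (n + j)%N n + cJ j n,
         a (n + j)%N n = - deltaJ j.-1 (2 * n + j).+1 / cJ j n &
         ((1 <= n)%N -> b (n + j)%N n = gammaJ j (2 * n + j)%N - a (n + j)%N n)]) /\
  (forall n k, (1 <= n)%N ->
     [/\ c n (n + k)%N = betaK k (2 * n + k)%N,
         d n (n + k)%N = c n (n + k)%N + cK k n,
         a n (n + k)%N = - deltaK k (2 * n + k)%N / cK k n.-1 &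
         b n (n + k)%N = gammaK k (2 * n + k)%N - a n (n + k)%N]) /\
  c 0%N 0%N = betaJ 0%N 0%N.
Proof.
move=> fm1 fm2 normal MOP nn1 nn2 recJ recJ_start _ recK _ _ _ _ cJ_def cK_def.
have size_P n m : size (P n m) = (n + m).+1 by case: (MOP n m).
have P_monic n m : P n m \is monic by case: (MOP n m).
have gap n m : d n m - c n m != 0.
  by rewrite (nn_gap_eq0 size_P nn1 nn2) (MOP_succ_neq fm1 fm2 _ _ normal MOP).
split; last split.
- exact: (stepJ_nn_coefs size_P P_monic nn1 nn2 gap recJ recJ_start cJ_def).
- exact: (stepK_nn_coefs size_P P_monic nn1 nn2 gap recK cK_def).
- exact: (stepJ_nn_coef0 size_P P_monic nn1 recJ).
Qed.
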